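(* Let $l>0$ and $(a,M)\in\mathcal B_l$. Then $G_2$ is twice differentiable at $r_{\Delta,frac}$, and there is $b=b(a,M,l)>0$ such that for all $r\in(r_+,\bar r_+)$ $$\frac{2V_{axi}(r)\,G_2'(r)}{g_1(r)}\ \ge\ b\,\frac{r^2+a^2}{r\Delta(r)},$$ where $G_2'=\frac{dG_2}{dr^\star}$.
   Context: $\Delta(r)=(r^2+a^2)(1-\frac{r^2}{l^2})-2Mr$; $(a,M)\in\mathcal B_l$ means $\Delta$ has four distinct real roots $\bar r_-<0\le r_-<r_+<\bar r_+$. The tortoise coordinate $r^\star$ satisfies $\frac{dr^\star}{dr}=\frac{r^2+a^2}{\Delta}$. $g_1=\frac{r^2+a^2}{\sqrt\Delta}$, $V_{axi}=\frac{(r^2+a^2)^2}{\Delta}$. $r_{\Delta,frac}\in(r_+,\bar r_+)$ is the unique critical point (maximum) of $\frac{\Delta}{(r^2+a^2)^2}$ on $(r_+,\bar r_+)$. $G_2^2=V_{axi}-\min_{[r_+,\bar r_+]}V_{axi}$, and $G_2=\sqrt{G_2^2}$ for $r\ge r_{\Delta,frac}$, $G_2=-\sqrt{G_2^2}$ for $r\le r_{\Delta,frac}$. *)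

From Stdlib Require Import Reals.
From Coquelicot Require Import Coquelicot.
Open Scope R_scope.

Definition Delta_l (a M l r : R) : R :=
  (r ^ 2 + a ^ 2) * (1 - r ^ 2 / l ^ 2) - 2 * M * r.

Definition in_B (l a M rbm rm rp rbp : R) : Prop :=
  rbm < 0 /\ 0 <= rm /\ rm < rp /\ rp < rbp /\
  Delta_l a M l rbm = 0 /\ Delta_l a M l rm = 0 /\
  Delta_l a M l rp = 0 /\ Delta_l a M l rbp = 0.

Definition g1 (a M l r : R) : R := (r ^ 2 + a ^ 2) / sqrt (Delta_l a M l r).

Definition Vaxi (a M l r : R) : R := (r ^ 2 + a ^ 2) ^ 2 / Delta_l a M l r.

(* Delta/(r^2+a^2)^2, whose unique critical point on (r_+, rbar_+) is r_{Delta,frac} *)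
Definition Dfrac (a M l r : R) : R := Delta_l a M l r / (r ^ 2 + a ^ 2) ^ 2.

Definition G2 (a M l r0 Vmin r : R) : R :=
  if Rle_dec r0 r then sqrt (Vaxi a M l r - Vmin)
  else - sqrt (Vaxi a M l r - Vmin).

Definition dstar (a M l : R) (f : R -> R) (r : R) : R :=
  Delta_l a M l r / (r ^ 2 + a ^ 2) * Derive f r.

From Stdlib Require Import Reals Lra Psatz.
From Coquelicot Require Import Coquelicot.
Open Scope R_scope.

(* Comparing coefficients of [l^2 Delta] with the product over its four roots (Vieta) gives
   [Delta > 0] on [(r_+, rbar_+)], [M > 0] and [Delta'(r_+) > 0].  The derivative of
   [Delta / (r^2+a^2)^2] is [-2 P / (r^2+a^2)^3] for a cubic [P]; since [P(r0) = 0] we have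
   [P = (r - r0) P2] with [P2] positive and increasing on [[r_+, oo)], so [r0] is the strict
   maximum of [Delta / (r^2+a^2)^2] there.  Consequently [V_axi - V_axi(r0) = (r - r0)^2 H]
   with [H = q / (Delta Delta(r0))] and [q] a quadratic that is positive on the interval: the
   minimum of [V_axi] is [V_axi(r0)], and [G_2 = (r - r0) sqrt H] is smooth there, with
   [dG_2/dr = (r^2+a^2) P2 / (Delta^2 sqrt H)].  The weighted derivative therefore equals
   [(r^2+a^2)/(r Delta) * 2 r P2(r) sqrt (Delta(r0) / q(r))], and [r P2(r)] is smallest at
   [r_+] while [q] is bounded above on the interval. *)

Lemma cubic_eq0_of_four_roots (c3 c2 c1 c0 x1 x2 x3 x4 : R) :
  let p x := c3 * x^3 + c2 * x^2 + c1 * x + c0 in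
  x1 < x2 -> x2 < x3 -> x3 < x4 ->
  p x1 = 0 -> p x2 = 0 -> p x3 = 0 -> p x4 = 0 ->
  c3 = 0 /\ c2 = 0 /\ c1 = 0 /\ c0 = 0.
Proof.
  intros p h12 h23 h34 q1 q2 q3 q4.
  (* successive divided differences of [p] at the four nodes *)
  set (p1 y x := c3 * (x^2 + x*y + y^2) + c2 * (x + y) + c1).
  set (p2 y z x := c3 * (x + y + z) + c2).
  assert (dd1 : forall y x, x <> y -> p x = 0 -> p y = 0 -> p1 y x = 0).
  { intros y x hxy hx hy. apply (Rmult_eq_reg_l (x - y)); [|lra].
    transitivity (p x - p y); [unfold p, p1; ring | lra]. }
  assert (dd2 : forall y z x, x <> z -> p1 y x = 0 -> p1 y z = 0 -> p2 y z x = 0).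
  { intros y z x hxz hx hz. apply (Rmult_eq_reg_l (x - z)); [|lra].
    transitivity (p1 y x - p1 y z); [unfold p1, p2; ring | lra]. }
  assert (F3 := dd2 x1 x2 x3 ltac:(lra) (dd1 x1 x3 ltac:(lra) q3 q1) (dd1 x1 x2 ltac:(lra) q2 q1)).
  assert (F4 := dd2 x1 x2 x4 ltac:(lra) (dd1 x1 x4 ltac:(lra) q4 q1) (dd1 x1 x2 ltac:(lra) q2 q1)).
  assert (C3 : c3 = 0).
  { apply (Rmult_eq_reg_l (x4 - x3)); [|lra].
    transitivity (p2 x1 x2 x4 - p2 x1 x2 x3); [unfold p2; ring | lra]. }
  pose proof (dd1 x1 x2 ltac:(lra) q2 q1) as E12.
  unfold p, p1, p2 in *. subst c3.
  assert (c2 = 0) by lra. subst c2. assert (c1 = 0) by lra. subst c1. lra.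
Qed.

Lemma is_derive_eq (f : R -> R) (x d d' : R) : is_derive f x d -> d = d' -> is_derive f x d'.
Proof. now intros H <-. Qed.

Lemma locally_in_interval (x y r : R) : x < r < y -> locally r (fun t => x < t < y).
Proof. intros hr. apply (locally_interval _ r x y); simpl; intros; lra. Qed.

Section Identities.

Variables a M l : R.
Hypothesis l_neq0 : l <> 0.

Local Notation Delta := (Delta_l a M l).

Definition kappa : R := 1 + a^2 / l^2.

Definition Delta_deriv (r : R) : R := 2*r - 4*r^3/l^2 - 2*r*a^2/l^2 - 2*M.

Definition crit_poly (r : R) : R := kappa * r^3 - 3*M*r^2 + kappa * a^2 * r + M*a^2.

Lemma kappa_pos : 0 < kappa.
Proof.
  unfold kappa. assert (0 <= a^2 / l^2) by (apply Rdiv_le_0_compat; [nra | now apply pow2_gt_0]).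
  lra.
Qed.

Lemma is_derive_Delta r : is_derive Delta r (Delta_deriv r).
Proof. unfold Delta_l, Delta_deriv. auto_derive; [easy | field; easy]. Qed.

Lemma is_derive_Dfrac r : 0 < r^2 + a^2 ->
  is_derive (Dfrac a M l) r (-2 * crit_poly r / (r^2 + a^2)^3).
Proof.
  intros hs. unfold Dfrac, Delta_l, crit_poly, kappa. auto_derive.
  - nra.
  - field. lra.
Qed.

Lemma crit_poly_eq0 r : 0 < r^2 + a^2 -> Derive (Dfrac a M l) r = 0 -> crit_poly r = 0.
Proof.
  intros hs hD. rewrite (is_derive_unique _ _ _ (is_derive_Dfrac r hs)) in hD.
  assert (0 < (r^2 + a^2)^3) by now apply pow_lt.
  apply (Rmult_eq_reg_l (-2 / (r^2 + a^2)^3)).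
  - rewrite Rmult_0_r, <- hD. field. lra.
  - apply Rmult_integral_contrapositive. split; [lra | apply Rinv_neq_0_compat; lra].
Qed.

Lemma crit_poly_Delta r :
  -2 * crit_poly r = Delta_deriv r * (r^2 + a^2) - 4 * r * Delta r.
Proof. unfold crit_poly, Delta_deriv, Delta_l, kappa. field. easy. Qed.

Variable r0 : R.

Definition crit_quot (r : R) : R :=
  kappa * (r^2 + r*r0 + r0^2) - 3*M*(r + r0) + kappa * a^2.

Lemma crit_poly_factor r : crit_poly r = (r - r0) * crit_quot r + crit_poly r0.
Proof. unfold crit_poly, crit_quot. ring. Qed.

Definition Vgap_num (r : R) : R :=
  kappa * (r0^2 + a^2) * (r^2 + 2*r0*r + 2*r0^2 + a^2)
  - 2*M*r0 * (r^2 + 2*r0*r + 3*r0^2 + 2*a^2).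

Definition Vgap_num_deriv (r : R) : R :=
  kappa * (r0^2 + a^2) * (2*r + 2*r0) - 2*M*r0 * (2*r + 2*r0).

Lemma is_derive_Vgap_num r : is_derive Vgap_num r (Vgap_num_deriv r).
Proof. unfold Vgap_num, Vgap_num_deriv. auto_derive; [easy | ring]. Qed.

Lemma Vgap_identity r :
  (r^2 + a^2)^2 * Delta r0 - (r0^2 + a^2)^2 * Delta r
  = (r - r0)^2 * Vgap_num r + 2 * (r - r0) * (r0^2 + a^2) * crit_poly r0.
Proof. unfold Vgap_num, crit_poly, Delta_l, kappa. field. easy. Qed.

Lemma Vgap_num_diag : Vgap_num r0 = (r0^2 + a^2) * crit_quot r0 + 2 * r0 * crit_poly r0.
Proof. unfold Vgap_num, crit_quot, crit_poly. ring. Qed.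

Definition Vgap_ratio (r : R) : R := Vgap_num r / (Delta r0 * Delta r).

Definition Vgap_ratio_deriv (r : R) : R :=
  (Vgap_num_deriv r * Delta r - Vgap_num r * Delta_deriv r) / (Delta r ^ 2 * Delta r0).

Lemma is_derive_Vgap_ratio r : Delta r <> 0 -> Delta r0 <> 0 ->
  is_derive Vgap_ratio r (Vgap_ratio_deriv r).
Proof.
  intros hD hD0.
  eapply is_derive_eq.
  - apply (is_derive_div _ _ r _ _ (is_derive_Vgap_num r)
      (is_derive_scal _ r (Delta r0) _ (is_derive_Delta r))).
    now apply Rmult_integral_contrapositive.
  - unfold Vgap_ratio_deriv. field. now split.
Qed.

Lemma Vaxi_sub r : crit_poly r0 = 0 -> Delta r <> 0 -> Delta r0 <> 0 ->
  Vaxi a M l r - Vaxi a M l r0 = (r - r0)^2 * Vgap_ratio r.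
Proof.
  intros hP hD hD0. unfold Vaxi, Vgap_ratio.
  apply (Rmult_eq_reg_r (Delta r0 * Delta r)); [|now apply Rmult_integral_contrapositive].
  transitivity ((r^2 + a^2)^2 * Delta r0 - (r0^2 + a^2)^2 * Delta r); [field; now split|].
  rewrite Vgap_identity, hP. field. now split.
Qed.

Definition G2_formula (r : R) : R := (r - r0) * sqrt (Vgap_ratio r).

Definition G2_formula_deriv (r : R) : R :=
  (r^2 + a^2) * crit_quot r / (Delta r ^ 2 * sqrt (Vgap_ratio r)).

Lemma G2_formula_deriv_numerator r : crit_poly r0 = 0 ->
  2 * Vgap_num r * Delta r + (r - r0) * (Vgap_num_deriv r * Delta r - Vgap_num r * Delta_deriv r)
  = 2 * (r^2 + a^2) * crit_quot r * Delta r0.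
Proof.
  intros hP. apply Rminus_diag_uniq.
  transitivity (crit_poly r0 * (2 * ((r^2 + a^2) * (r0^2 + a^2) / l^2 * (r + r0)
                  - 2*M*(r*r0 - a^2) + (r0^2 + a^2) * Delta_deriv r))).
  - unfold Vgap_num, Vgap_num_deriv, crit_quot, crit_poly, Delta_l, Delta_deriv, kappa.
    field. easy.
  - rewrite hP. ring.
Qed.

Lemma is_derive_G2_formula r : crit_poly r0 = 0 -> Delta r <> 0 -> Delta r0 <> 0 ->
  0 < Vgap_ratio r -> is_derive G2_formula r (G2_formula_deriv r).
Proof.
  intros hP hD hD0 hH.
  pose proof (sqrt_lt_R0 _ hH) as hS. pose proof (sqrt_sqrt _ (Rlt_le _ _ hH)) as hSS.
  eapply is_derive_eq.
  - apply (is_derive_mult (fun t => t - r0) (fun t => sqrt (Vgap_ratio t)) r 1).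
    + auto_derive; [easy | ring].
    + apply is_derive_sqrt; [now apply is_derive_Vgap_ratio | easy].
    + apply Rmult_comm.
  - unfold plus, mult; simpl. unfold G2_formula_deriv.
    set (S := sqrt (Vgap_ratio r)) in *.
    transitivity ((2 * Vgap_ratio r + (r - r0) * Vgap_ratio_deriv r) / (2 * S)).
    { rewrite <- hSS. field. lra. }
    unfold Vgap_ratio, Vgap_ratio_deriv.
    transitivity ((2 * Vgap_num r * Delta r + (r - r0) * (Vgap_num_deriv r * Delta r
       - Vgap_num r * Delta_deriv r)) / (2 * Delta r ^ 2 * Delta r0 * S)).
    { field. repeat split; lra. }
    rewrite G2_formula_deriv_numerator by easy. field. repeat split; lra.
Qed.

Lemma ex_derive_G2_formula_deriv r : Delta r <> 0 -> Delta r0 <> 0 -> 0 < Vgap_ratio r ->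
  ex_derive G2_formula_deriv r.
Proof.
  intros hD hD0 hH. unfold G2_formula_deriv. apply ex_derive_div.
  - unfold crit_quot. auto_derive. easy.
  - apply ex_derive_mult.
    + apply ex_derive_pow. eexists. apply is_derive_Delta.
    + eexists. apply is_derive_sqrt; [now apply is_derive_Vgap_ratio | easy].
  - apply Rmult_integral_contrapositive. split.
    + now apply pow_nonzero.
    + apply Rgt_not_eq, sqrt_lt_R0, hH.
Qed.

End Identities.

Section Roots.

Variables l a M rbm rm rp rbp : R.
Hypothesis l_pos : 0 < l.
Hypothesis roots : in_B l a M rbm rm rp rbp.

Local Notation Delta := (Delta_l a M l).

Let l_neq0 : l <> 0 := Rgt_not_eq l 0 l_pos.

Lemma Delta_vieta :
  rbm + rm + rp + rbp = 0 /\
  rbm*rm + rbm*rp + rbm*rbp + rm*rp + rm*rbp + rp*rbp = a^2 - l^2 /\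
  rbm*rm*rp + rbm*rm*rbp + rbm*rp*rbp + rm*rp*rbp = -2*M*l^2 /\
  rbm*rm*rp*rbp = -a^2*l^2.
Proof.
  destruct roots as (h1 & h2 & h3 & h4 & d1 & d2 & d3 & d4).
  set (c3 := - (rbm + rm + rp + rbp)).
  set (c2 := rbm*rm + rbm*rp + rbm*rbp + rm*rp + rm*rbp + rp*rbp + l^2 - a^2).
  set (c1 := - (rbm*rm*rp + rbm*rm*rbp + rbm*rp*rbp + rm*rp*rbp) - 2*M*l^2).
  set (c0 := rbm*rm*rp*rbp + a^2*l^2).
  assert (cubic : forall x, c3 * x^3 + c2 * x^2 + c1 * x + c0
                   = l^2 * Delta x + (x - rbm) * (x - rm) * (x - rp) * (x - rbp)).
  { intros x. unfold c3, c2, c1, c0, Delta_l. field. easy. }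
  destruct (cubic_eq0_of_four_roots c3 c2 c1 c0 rbm rm rp rbp) as (e3 & e2 & e1 & e0).
  1-3: lra.
  1-4: cbv beta; rewrite cubic, ?d1, ?d2, ?d3, ?d4; ring.
  unfold c3, c2, c1, c0 in *. lra.
Qed.

Lemma Delta_factor r : l^2 * Delta r = - ((r - rbm) * (r - rm) * (r - rp) * (r - rbp)).
Proof.
  destruct Delta_vieta as (v1 & v2 & v3 & v4).
  transitivity (- r^4 + (l^2 - a^2) * r^2 - 2*M*l^2 * r + a^2*l^2).
  - unfold Delta_l. field. easy.
  - apply (f_equal (fun t => t * r^2)) in v2. apply (f_equal (fun t => t * r)) in v3.
    replace rbm with (- (rm + rp + rbp)) in * by lra. lra.
Qed.

Lemma Delta_pos r : rp < r < rbp -> 0 < Delta r.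
Proof.
  intros hr. destruct roots as (h1 & h2 & h3 & h4 & _).
  pose proof (Delta_factor r) as E.
  assert (0 < (r - rbm) * (r - rm) * (r - rp)) by (repeat apply Rmult_lt_0_compat; lra).
  assert (0 < l^2) by now apply pow2_gt_0.
  nra.
Qed.

Lemma M_pos : 0 < M.
Proof.
  destruct Delta_vieta as (v1 & _ & v3 & _).
  destruct roots as (h1 & h2 & h3 & h4 & _).
  replace rbm with (- (rm + rp + rbp)) in v3 by lra.
  assert (0 < l^2) by now apply pow2_gt_0.
  assert (0 <= rm*rp*rbp) by (repeat apply Rmult_le_pos; lra).
  assert (0 <= rm*rm*(rp + rbp)) by (repeat apply Rmult_le_pos; lra).
  assert (0 <= rm*(rp*rp + rbp*rbp)) by (apply Rmult_le_pos; nra).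
  assert (0 < rp*rbp*(rp + rbp)) by (repeat apply Rmult_lt_0_compat; lra).
  nra.
Qed.

Lemma Delta_deriv_horizon_pos : 0 < Delta_deriv a M l rp.
Proof.
  destruct Delta_vieta as (v1 & v2 & v3 & _).
  destruct roots as (h1 & h2 & h3 & h4 & _).
  assert (E : l^2 * Delta_deriv a M l rp = - ((rp - rbm) * (rp - rm) * (rp - rbp))).
  { transitivity (- 4*rp^3 + 2*(l^2 - a^2)*rp - 2*M*l^2).
    - unfold Delta_deriv. field. easy.
    - apply (f_equal (fun t => t * rp)) in v2.
      replace rbm with (- (rm + rp + rbp)) in * by lra. lra. }
  assert (0 < (rp - rbm) * (rp - rm)) by (apply Rmult_lt_0_compat; lra).
  assert (0 < l^2) by now apply pow2_gt_0.
  nra.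
Qed.

Section CriticalPoint.

Variable r0 : R.
Hypothesis r0_in : rp < r0 < rbp.
Hypothesis crit_r0 : crit_poly a M l r0 = 0.

Lemma crit_quot_horizon_pos : 0 < crit_quot a M l r0 rp.
Proof.
  destruct roots as (_ & h2 & h3 & _ & _ & _ & d3 & _).
  assert (hP : crit_poly a M l rp < 0).
  { pose proof (crit_poly_Delta a M l l_neq0 rp) as E. rewrite d3 in E.
    assert (0 < Delta_deriv a M l rp * (rp^2 + a^2))
      by (apply Rmult_lt_0_compat; [apply Delta_deriv_horizon_pos | nra]).
    lra. }
  pose proof (crit_poly_factor a M l r0 rp) as E. rewrite crit_r0 in E. nra.
Qed.

(* [crit_poly r0 = 0] forces [crit_quot 0 = - M a^2 / r0 <= 0 < crit_quot rp], so the slope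
   of [crit_quot] between [0] and [rp] is positive, and it increases to the right. *)
Lemma crit_quot_slope_pos : 0 < kappa a l * (rp + r0) - 3 * M.
Proof.
  destruct roots as (_ & h2 & h3 & _).
  pose proof crit_quot_horizon_pos as hq.
  assert (hq0 : crit_quot a M l r0 0 <= 0).
  { pose proof (crit_poly_factor a M l r0 0) as E. rewrite crit_r0 in E.
    assert (crit_poly a M l 0 = M * a^2) by (unfold crit_poly; ring).
    pose proof (M_pos). nra. }
  assert (E : crit_quot a M l r0 rp - crit_quot a M l r0 0 = rp * (kappa a l * (rp + r0) - 3 * M))
    by (unfold crit_quot; ring).
  nra.
Qed.

Lemma crit_quot_mono c : rp <= c -> crit_quot a M l r0 rp <= crit_quot a M l r0 c.
Proof.
  intros hc. destruct roots as (_ & h2 & h3 & _).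
  pose proof crit_quot_slope_pos. pose proof (kappa_pos a l l_neq0).
  assert (E : crit_quot a M l r0 c - crit_quot a M l r0 rp
              = (c - rp) * (kappa a l * (c + rp + r0) - 3 * M)) by (unfold crit_quot; ring).
  assert (0 <= (c - rp) * (kappa a l * (c + rp + r0) - 3 * M)) by (apply Rmult_le_pos; nra).
  lra.
Qed.

Lemma crit_quot_pos c : rp <= c -> 0 < crit_quot a M l r0 c.
Proof. intros hc. pose proof crit_quot_horizon_pos. pose proof (crit_quot_mono c hc). lra. Qed.

Let Delta_neq0 r (hr : rp < r < rbp) : Delta r <> 0 := Rgt_not_eq _ _ (Delta_pos r hr).

Lemma Dfrac_lt_crit r : rp < r -> r <> r0 -> Dfrac a M l r < Dfrac a M l r0.
Proof.
  intros hr hne. destruct roots as (_ & h2 & h3 & _).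
  set (f' c := -2 * crit_poly a M l c / (c^2 + a^2)^3).
  assert (hd : forall c, rp <= c -> derivable_pt_lim (Dfrac a M l) c (f' c)).
  { intros c hc. apply is_derive_Reals, is_derive_Dfrac; [easy | nra]. }
  assert (sign : forall c, rp < c -> c <> r0 -> f' c * (c - r0) < 0).
  { intros c hc hc0. unfold f'. rewrite (crit_poly_factor a M l r0 c), crit_r0.
    assert (0 < c^2 + a^2) by nra.
    assert (0 < (c - r0)^2 * crit_quot a M l r0 c / (c^2 + a^2)^3).
    { apply Rdiv_lt_0_compat; [apply Rmult_lt_0_compat | now apply pow_lt].
      - apply pow2_gt_0. lra.
      - apply crit_quot_pos. lra. }
    replace (-2 * ((c - r0) * crit_quot a M l r0 c + 0) / (c^2 + a^2)^3 * (c - r0))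
      with (-2 * ((c - r0)^2 * crit_quot a M l r0 c / (c^2 + a^2)^3)) by (field; lra).
    lra. }
  destruct (Rlt_or_le r r0) as [lt | le].
  - destruct (MVT_cor2 (Dfrac a M l) f' r r0 lt) as (c & E & hc);
      [intros c hc; apply hd; lra |].
    pose proof (sign c ltac:(lra) ltac:(lra)). nra.
  - destruct (MVT_cor2 (Dfrac a M l) f' r0 r ltac:(lra)) as (c & E & hc);
      [intros c hc; apply hd; lra |].
    pose proof (sign c ltac:(lra) ltac:(lra)). nra.
Qed.

Lemma Vgap_num_pos r : rp < r -> 0 < Vgap_num a M l r0 r.
Proof.
  intros hr. destruct roots as (_ & h2 & h3 & _).
  assert (hs : 0 < r^2 + a^2) by nra. assert (hs0 : 0 < r0^2 + a^2) by nra.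
  destruct (Req_dec r r0) as [-> | hne].
  - rewrite Vgap_num_diag, crit_r0. pose proof (crit_quot_pos r0 ltac:(lra)). nra.
  - pose proof (Dfrac_lt_crit r hr hne) as hf. unfold Dfrac in hf.
    pose proof (Vgap_identity a M l l_neq0 r0 r) as W. rewrite crit_r0 in W.
    assert (E : (r^2 + a^2)^2 * Delta r0 - (r0^2 + a^2)^2 * Delta r
      = ((r^2 + a^2)^2 * (r0^2 + a^2)^2)
        * (Delta r0 / (r0^2 + a^2)^2 - Delta r / (r^2 + a^2)^2)) by (field; lra).
    assert (0 < (r^2 + a^2)^2 * (r0^2 + a^2)^2) by (apply Rmult_lt_0_compat; apply pow_lt; lra).
    assert (0 < (r - r0)^2) by (apply pow2_gt_0; lra).
    nra.
Qed.

Lemma Vgap_ratio_pos r : rp < r < rbp -> 0 < Vgap_ratio a M l r0 r.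
Proof.
  intros hr. unfold Vgap_ratio. apply Rdiv_lt_0_compat; [apply Vgap_num_pos; lra |].
  apply Rmult_lt_0_compat; now apply Delta_pos.
Qed.

Lemma Vaxi_crit_le r : rp < r < rbp -> Vaxi a M l r0 <= Vaxi a M l r.
Proof.
  intros hr.
  pose proof (Vaxi_sub a M l l_neq0 r0 r crit_r0 (Delta_neq0 r hr) (Delta_neq0 r0 r0_in)) as E.
  pose proof (Vgap_ratio_pos r hr). pose proof (pow2_ge_0 (r - r0)). nra.
Qed.

Local Notation G2crit := (G2 a M l r0 (Vaxi a M l r0)).

Lemma G2_eq_formula r : rp < r < rbp -> G2crit r = G2_formula a M l r0 r.
Proof.
  intros hr. unfold G2, G2_formula.
  rewrite (Vaxi_sub a M l l_neq0 r0 r crit_r0 (Delta_neq0 r hr) (Delta_neq0 r0 r0_in)).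
  rewrite sqrt_mult_alt by apply pow2_ge_0.
  destruct (Rle_dec r0 r).
  - rewrite sqrt_pow2 by lra. reflexivity.
  - replace ((r - r0)^2) with ((r0 - r)^2) by ring. rewrite sqrt_pow2 by lra. ring.
Qed.

Lemma is_derive_G2 r : rp < r < rbp -> is_derive G2crit r (G2_formula_deriv a M l r0 r).
Proof.
  intros hr. apply (is_derive_ext_loc (G2_formula a M l r0)).
  - eapply filter_imp; [| apply (locally_in_interval rp rbp r hr)].
    intros t ht. symmetry. now apply G2_eq_formula.
  - apply is_derive_G2_formula; auto using Vgap_ratio_pos.
Qed.

Lemma G2_twice_differentiable :
  (exists eps : posreal, forall r, Rabs (r - r0) < eps -> ex_derive G2crit r) /\
  ex_derive (Derive G2crit) r0.
Proof.
  split.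
  - assert (he : 0 < Rmin (r0 - rp) (rbp - r0)) by (apply Rmin_glb_lt; lra).
    exists (mkposreal _ he). intros r hr. simpl in hr. apply Rabs_def2 in hr.
    pose proof (Rmin_l (r0 - rp) (rbp - r0)). pose proof (Rmin_r (r0 - rp) (rbp - r0)).
    eexists. apply is_derive_G2. lra.
  - apply (ex_derive_ext_loc (G2_formula_deriv a M l r0)).
    + eapply filter_imp; [| apply (locally_in_interval rp rbp r0 r0_in)].
      intros t ht. symmetry. now apply is_derive_unique, is_derive_G2.
    + apply ex_derive_G2_formula_deriv; auto using Vgap_ratio_pos.
Qed.

Lemma weighted_G2_deriv_eq r : rp < r < rbp ->
  2 * Vaxi a M l r * dstar a M l G2crit r / g1 a M l r
  = (r^2 + a^2) / (r * Delta r)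
    * (2 * r * crit_quot a M l r0 r * sqrt (Delta r0) / sqrt (Vgap_num a M l r0 r)).
Proof.
  intros hr. destruct roots as (_ & h2 & h3 & _).
  pose proof (Delta_pos r hr) as hD. pose proof (Delta_pos r0 r0_in) as hD0.
  pose proof (Vgap_num_pos r ltac:(lra)) as hq.
  unfold dstar. rewrite (is_derive_unique _ _ _ (is_derive_G2 r hr)).
  unfold Vaxi, g1, G2_formula_deriv, Vgap_ratio.
  rewrite sqrt_div_alt, sqrt_mult_alt by (try apply Rmult_lt_0_compat; lra).
  pose proof (sqrt_lt_R0 _ hq). pose proof (sqrt_lt_R0 _ hD0). pose proof (sqrt_lt_R0 _ hD).
  set (s := sqrt (Delta r)).
  assert (hss : s * s = Delta r) by (apply sqrt_sqrt; lra).
  rewrite <- hss. field. repeat split; nra.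
Qed.

Lemma Vgap_num_le r : rp < r < rbp ->
  Vgap_num a M l r0 r <= kappa a l * (r0^2 + a^2) * (rbp^2 + 2*r0*rbp + 2*r0^2 + a^2).
Proof.
  intros hr. destruct roots as (_ & h2 & h3 & _).
  pose proof M_pos. pose proof (kappa_pos a l l_neq0).
  unfold Vgap_num.
  assert (0 <= 2*M*r0 * (r^2 + 2*r0*r + 3*r0^2 + 2*a^2)) by (repeat apply Rmult_le_pos; nra).
  assert (r^2 + 2*r0*r + 2*r0^2 + a^2 <= rbp^2 + 2*r0*rbp + 2*r0^2 + a^2) by nra.
  assert (0 < kappa a l * (r0^2 + a^2)) by (apply Rmult_lt_0_compat; nra).
  nra.
Qed.

Lemma weighted_G2_deriv_lower_bound : exists b, 0 < b /\ forall r, rp < r < rbp ->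
  2 * Vaxi a M l r * dstar a M l G2crit r / g1 a M l r
  >= b * ((r^2 + a^2) / (r * Delta r)).
Proof.
  destruct roots as (_ & h2 & h3 & _).
  set (Qmax := kappa a l * (r0^2 + a^2) * (rbp^2 + 2*r0*rbp + 2*r0^2 + a^2)).
  set (num r := 2 * r * crit_quot a M l r0 r * sqrt (Delta r0)).
  pose proof (sqrt_lt_R0 _ (Delta_pos r0 r0_in)).
  pose proof (crit_quot_horizon_pos).
  assert (hQ : 0 < Qmax).
  { pose proof (Vgap_num_le r0 r0_in). pose proof (Vgap_num_pos r0 ltac:(lra)). unfold Qmax. lra. }
  assert (hnum : 0 < num rp) by (unfold num; repeat apply Rmult_lt_0_compat; lra).
  exists (num rp / sqrt Qmax). split; [apply Rdiv_lt_0_compat; [easy | now apply sqrt_lt_R0] |].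
  intros r hr. rewrite weighted_G2_deriv_eq by easy. fold (num r).
  pose proof (Delta_pos r hr). pose proof (Vgap_num_pos r ltac:(lra)) as hq.
  assert (hw : num rp / sqrt Qmax <= num r / sqrt (Vgap_num a M l r0 r)).
  { unfold Rdiv. apply Rmult_le_compat.
    - lra.
    - apply Rlt_le, Rinv_0_lt_compat, sqrt_lt_R0, hQ.
    - unfold num. pose proof (crit_quot_mono r ltac:(lra)).
      apply Rmult_le_compat_r; [lra |]. apply Rmult_le_compat; lra.
    - apply Rinv_le_contravar; [now apply sqrt_lt_R0 |].
      apply sqrt_le_1_alt, Vgap_num_le, hr. }
  apply Rle_ge. rewrite Rmult_comm. apply Rmult_le_compat_l; [| exact hw].
  apply Rlt_le, Rdiv_lt_0_compat; nra.
Qed.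

End CriticalPoint.

End Roots.

Theorem mainTheorem10 :
  forall (l a M rbm rm rp rbp r0 Vmin : R),
    0 < l ->
    in_B l a M rbm rm rp rbp ->
    rp < r0 < rbp ->
    Derive (Dfrac a M l) r0 = 0 ->
    (exists r1, rp < r1 < rbp /\ Vaxi a M l r1 = Vmin) ->
    (forall r, rp < r < rbp -> Vmin <= Vaxi a M l r) ->
    ((exists eps : posreal, forall r, Rabs (r - r0) < eps ->
         ex_derive (G2 a M l r0 Vmin) r) /\
     ex_derive (Derive (G2 a M l r0 Vmin)) r0) /\
    (forall r, rp < r < rbp -> ex_derive (G2 a M l r0 Vmin) r) /\
    exists b : R, 0 < b /\
      forall r, rp < r < rbp ->
        (2 * Vaxi a M l r * dstar a M l (G2 a M l r0 Vmin) r / g1 a M l r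
        >= b * ((r ^ 2 + a ^ 2) / (r * Delta_l a M l r)))%R.
Proof.
  intros l a M rbm rm rp rbp r0 Vmin hl hB hr0 hDf [r1 [hr1 hV1]] hVmin.
  assert (hP : crit_poly a M l r0 = 0).
  { destruct hB as (_ & hrm & hrp & _).
    apply (crit_poly_eq0 a M l (Rgt_not_eq _ _ hl)); [nra | exact hDf]. }
  assert (hV : Vmin = Vaxi a M l r0).
  { apply Rle_antisym; [now apply hVmin |].
    rewrite <- hV1. exact (Vaxi_crit_le _ _ _ _ _ _ _ hl hB r0 hr0 hP r1 hr1). }
  rewrite hV. split; [|split].
  - exact (G2_twice_differentiable _ _ _ _ _ _ _ hl hB r0 hr0 hP).
  - intros r hr. eexists. exact (is_derive_G2 _ _ _ _ _ _ _ hl hB r0 hr0 hP r hr).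
  - exact (weighted_G2_deriv_lower_bound _ _ _ _ _ _ _ hl hB r0 hr0 hP).
Qed.
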